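(* Let $\mathcal{A}=(T(\Sigma,X),\Rightarrow_\Pi)$ be an abstract reduction system closed under substitutions, and let $(u_1\Rightarrow_{w_1}v_1,\ u_2\Rightarrow_{w_2}v_2)$ be a recurrent pair in $\mathcal{A}$, with $c_1,c_2,x,y,s,t,n_1,n_2,n_3,n_4$ as in the definition of recurrent pair. Then for all $m\in\mathbb{N}$, $c_1[m,n_2]\Rightarrow_{w_2}c_1[m'+n_3,\ m+n_4]$, where $m'=0$ if $t=s$ and $m'=m$ if $t=x$.
   Context: Fix a signature $\Sigma$, a countably infinite set $X$ of variables disjoint from $\Sigma$, and two distinct fresh hole constants $\square,\square'\notin\Sigma\cup X$. Terms are elements of $T(\Sigma,X)$; substitutions $\theta$ (maps $X\to T(\Sigma,X)$ moving finitely many variables) act homomorphically; $\mathit{Var}$ denotes the variable set. An abstract reduction system $(A,\Rightarrow_\Pi)$ has $\Rightarrow_\Pi=\bigcup_{\pi\in\Pi}\Rightarrow_\pi$; for $w=\langle\pi_1,\dots,\pi_k\rangle\in\Pi^*$, $\Rightarrow_w=\Rightarrow_{\pi_1}\circ\cdots\circ\Rightarrow_{\pi_k}$ ($\Rightarrow_\epsilon$ the identity). It is closed under substitutions if for all $s,t\in A$, $w\in\Pi^*$ and substitutions $\theta$, $s\Rightarrow_w t$ implies $s\theta\Rightarrow_w t\theta$. Let $c_1$ be a term over $\Sigma\cup\{\square,\square'\}$ and $X$ containing at least one occurrence of $\square$ and of $\square'$, and $c_1[t,t']$ the result of replacing all $\square$ by $t$ and all $\square'$ by $t'$. Let $c_2$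 be a term over $\Sigma\cup\{\square\}$ and $X$ containing at least one $\square$ (and no $\square'$), $c_2[t]$ the result of replacing all $\square$ by $t$, $c_2^0[t]=t$, $c_2^{k+1}[t]=c_2[c_2^k[t]]$. A recurrent pair in $\mathcal{A}$ is a pair of chains $u_1\Rightarrow_{w_1}v_1$ and $u_2\Rightarrow_{w_2}v_2$ ($w_1,w_2\in\Pi^*$) such that: $u_1=c_1[x,c_2[y]]$, $v_1=c_1[c_2^{n_1}[x],y]$, $u_2=c_1[x,c_2^{n_2}[s]]$, $v_2=c_1[c_2^{n_3}[t],c_2^{n_4}[x]]$ for variables $x\neq y$ with $\{x,y\}\cap\mathit{Var}(c_1)=\emptyset$, a term $s$, naturals $n_1,n_2,n_3,n_4$; $\mathit{Var}(c_2)=\mathit{Var}(s)=\emptyset$; $t\in\{x,s\}$; and $n_4\ge n_2$. For $m,n\in\mathbb{N}$, $c_1[m,n]$ denotes the term $c_1[c_2^m[s],c_2^n[s]]$. *)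

From Stdlib Require Import List Arith.
Import ListNotations.
Set Implicit Arguments.

(* Terms over function symbols F (with an arity function) and variables V.
   Arity constraints are expressed by the predicate [wf] below. *)
Inductive term (F V : Type) : Type :=
| Var : V -> term F V
| App : F -> list (term F V) -> term F V.
Arguments Var {F V} _.
Arguments App {F V} _ _.

Fixpoint wf {F V} (ar : F -> nat) (t : term F V) : Prop :=
  match t with
  | Var _ => True
  | App f ts => length ts = ar f /\
      (fix wfl (l : list (term F V)) : Prop :=
         match l with nil => True | u :: r => wf ar u /\ wfl r end) ts
  end.

Fixpoint vars {F V} (t : term F V) : list V :=
  match t with
  | Var x => [x]
  | App _ ts => flat_map vars ts
  end.

Fixpoint subst {F V} (th : V -> term F V) (t : term F V) : term F V :=
  match t with
  | Var x => th x
  | App f ts => App f (map (subst th) ts)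
  end.

Definition substitution {F V} (ar : F -> nat) (th : V -> term F V) : Prop :=
  (exists l : list V, forall x, ~ In x l -> th x = Var x) /\
  (forall x, wf ar (th x)).

Inductive hole : Type := Box | Box'.

Definition ext_ar {F} (ar : F -> nat) (g : F + hole) : nat :=
  match g with inl f => ar f | inr _ => 0 end.

Fixpoint has_hole {F V} (h : hole) (c : term (F + hole) V) : Prop :=
  match c with
  | Var _ => False
  | App (inr h') ts => h' = h \/
      (fix l (us : list (term (F + hole) V)) : Prop :=
         match us with nil => False | u :: r => has_hole h u \/ l r end) ts
  | App (inl _) ts =>
      (fix l (us : list (term (F + hole) V)) : Prop :=
         match us with nil => False | u :: r => has_hole h u \/ l r end) ts
  end.

(* c[a,b]: replace every □ by a and every □' by b. *)
Fixpoint fill {F V} (a b : term F V) (c : term (F + hole) V) : term F V :=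
  match c with
  | Var x => Var x
  | App (inl f) ts => App f (map (fill a b) ts)
  | App (inr Box) _ => a
  | App (inr Box') _ => b
  end.

(* For a one-hole-kind context c2 (no □'), c2[t] := fill t t c2. *)
Definition fill1 {F V} (c : term (F + hole) V) (t : term F V) : term F V :=
  fill t t c.

Fixpoint fill_iter {F V} (c : term (F + hole) V) (k : nat) (t : term F V) : term F V :=
  match k with
  | 0 => t
  | S k' => fill1 c (fill_iter c k' t)
  end.

(* s =>_w t for w = <pi_1,...,pi_k>: s =>_{pi_1} . ... . =>_{pi_k} t
   (relation composition, pi_1 applied first); =>_epsilon is the identity. *)
Fixpoint steps {P T : Type} (R : P -> T -> T -> Prop) (w : list P) : T -> T -> Prop :=
  match w with
  | nil => fun s t => s = t
  | p :: w' => fun s t => exists u, R p s u /\ steps R w' u t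
  end.

Definition ars_on_terms {F V P} (ar : F -> nat) (R : P -> term F V -> term F V -> Prop) : Prop :=
  forall p s t, R p s t -> wf ar s /\ wf ar t.

Definition closed_under_substitutions {F V P} (ar : F -> nat)
  (R : P -> term F V -> term F V -> Prop) : Prop :=
  forall (s t : term F V) (w : list P) (th : V -> term F V),
    wf ar s -> wf ar t -> substitution ar th ->
    steps R w s t -> steps R w (subst th s) (subst th t).

(* Since the ARS is closed under substitutions,
   the chain u2 =>_{w2} v2 may be instantiated by x |-> c2^m[s].  The contexts c1,
   c2 and the term s are unaffected (x does not occur in c1, and c2, s are ground),
   so the instance is c1[c2^m[s], c2^n2[s]] =>_{w2} c1[c2^n3[t'], c2^(n4+m)[s]],
   where t' = c2^m[s] if t = x and t' = s if t = s. *)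
From Stdlib Require Import List Arith.

Section Filling.
Context {F V : Type}.

Lemma fill_wf (ar : F -> nat) (a b : term F V) :
  wf ar a -> wf ar b -> forall c, wf (ext_ar ar) c -> wf ar (fill a b c).
Proof.
  intros Ha Hb. fix IH 1. intros [z | [f | h] ts]; simpl.
  - trivial.
  - intros [Hlen Hts]. split; [now rewrite length_map |].
    clear Hlen. induction ts as [| u r IHr]; simpl in *; [trivial |].
    destruct Hts as [Hu Hr]. split; [apply IH | apply IHr]; assumption.
  - intros _. destruct h; assumption.
Qed.

Lemma fill_iter_wf (ar : F -> nat) (c : term (F + hole) V) :
  wf (ext_ar ar) c -> forall k u, wf ar u -> wf ar (fill_iter c k u).
Proof.
  intros Hc k. induction k as [| k IHk]; intros u Hu; simpl; [exact Hu |].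
  apply fill_wf; auto.
Qed.

Lemma fill_iter_add (c : term (F + hole) V) k m u :
  fill_iter c k (fill_iter c m u) = fill_iter c (k + m) u.
Proof. induction k as [| k IHk]; simpl; congruence. Qed.

Lemma subst_id_on_vars (th : V -> term F V) :
  forall u, (forall z, In z (vars u) -> th z = Var z) -> subst th u = u.
Proof.
  fix IH 1. intros [z | f ts]; simpl; intros Hfix.
  - apply Hfix. now left.
  - f_equal. induction ts as [| u r IHr]; simpl in *; [reflexivity |].
    f_equal; [apply IH | apply IHr]; intros z Hz; apply Hfix, in_or_app; auto.
Qed.

Lemma subst_ground (th : V -> term F V) (u : term F V) :
  vars u = nil -> subst th u = u.
Proof. intros Hu. apply subst_id_on_vars. rewrite Hu. intros _ []. Qed.

Lemma subst_fill (th : V -> term F V) (a b : term F V) :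
  forall c, (forall z, In z (vars c) -> th z = Var z) ->
  subst th (fill a b c) = fill (subst th a) (subst th b) c.
Proof.
  fix IH 1. intros [z | [f | h] ts]; simpl; intros Hfix.
  - apply Hfix. now left.
  - f_equal. rewrite map_map. induction ts as [| u r IHr]; simpl in *; [reflexivity |].
    f_equal; [apply IH | apply IHr]; intros z Hz; apply Hfix, in_or_app; auto.
  - destruct h; reflexivity.
Qed.

Lemma subst_fill_iter (th : V -> term F V) (c : term (F + hole) V) :
  vars c = nil -> forall k u, subst th (fill_iter c k u) = fill_iter c k (subst th u).
Proof.
  intros Hc k. induction k as [| k IHk]; intros u; simpl; [reflexivity |].
  unfold fill1. rewrite subst_fill, IHk; [reflexivity |].
  rewrite Hc. intros _ [].
Qed.

End Filling.

Section SingleSubstitution.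
Context {F V : Type}.
Variable V_eq_dec : forall a b : V, {a = b} + {a <> b}.

Definition single_subst (x : V) (u : term F V) : V -> term F V :=
  fun z => if V_eq_dec z x then u else Var z.

Lemma single_subst_at x u : single_subst x u x = u.
Proof. unfold single_subst. now destruct (V_eq_dec x x). Qed.

Lemma single_subst_other x u z : z <> x -> single_subst x u z = Var z.
Proof. unfold single_subst. now destruct (V_eq_dec z x). Qed.

Lemma single_subst_substitution (ar : F -> nat) x u :
  wf ar u -> substitution ar (single_subst x u).
Proof.
  intros Hu. split.
  - exists (x :: nil). intros z Hz. apply single_subst_other. intros ->. apply Hz. now left.
  - intros z. unfold single_subst. destruct (V_eq_dec z x); simpl; auto.
Qed.

End SingleSubstitution.

(* Sigma = (F, ar); X = nat (a countably infinite variable set); Pi = P. *)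
Theorem lemma11
  (F : Type) (ar : F -> nat) (P : Type)
  (R : P -> term F nat -> term F nat -> Prop)
  (HA : ars_on_terms ar R)
  (Hclosed : closed_under_substitutions ar R)
  (c1 c2 : term (F + hole) nat) (x y : nat) (s : term F nat)
  (t_is_x : bool) (n1 n2 n3 n4 : nat) (w1 w2 : list P)
  (Hc1wf : wf (ext_ar ar) c1) (Hc1b : has_hole Box c1) (Hc1b' : has_hole Box' c1)
  (Hc2wf : wf (ext_ar ar) c2) (Hc2b : has_hole Box c2) (Hc2nb' : ~ has_hole Box' c2)
  (Hxy : x <> y) (Hxc1 : ~ In x (vars c1)) (Hyc1 : ~ In y (vars c1))
  (Hc2vars : vars c2 = nil) (Hswf : wf ar s) (Hsvars : vars s = nil)
  (Hn : n2 <= n4) :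
  let t := if t_is_x then Var x else s in
  steps R w1 (fill (Var x) (fill1 c2 (Var y)) c1)
             (fill (fill_iter c2 n1 (Var x)) (Var y) c1) ->
  steps R w2 (fill (Var x) (fill_iter c2 n2 s) c1)
             (fill (fill_iter c2 n3 t) (fill_iter c2 n4 (Var x)) c1) ->
  forall m : nat,
    let m' := if t_is_x then m else 0 in
    steps R w2 (fill (fill_iter c2 m s) (fill_iter c2 n2 s) c1)
               (fill (fill_iter c2 (m' + n3) s) (fill_iter c2 (m + n4) s) c1).
Proof.
  intros t _ Hchain m m'.
  set (th := single_subst Nat.eq_dec x (fill_iter c2 m s)).
  assert (Hc2m : wf ar (fill_iter c2 m s)) by now apply fill_iter_wf.
  assert (Hsrc : wf ar (fill (Var x) (fill_iter c2 n2 s) c1)).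
  { apply fill_wf; simpl; auto using fill_iter_wf. }
  assert (Htgt : wf ar (fill (fill_iter c2 n3 t) (fill_iter c2 n4 (Var x)) c1)).
  { assert (Htwf : wf ar t) by (unfold t; destruct t_is_x; simpl; auto).
    apply fill_wf; try apply fill_iter_wf; simpl; auto. }
  assert (Hinst := Hclosed _ _ w2 th Hsrc Htgt
                     (single_subst_substitution _ _ _ _ Hc2m) Hchain).
  assert (Hc1fixed : forall z, In z (vars c1) -> th z = Var z).
  { intros z Hz. apply single_subst_other. now intros ->. }
  assert (Hx : subst th (Var x) = fill_iter c2 m s) by apply single_subst_at.
  assert (Ht : subst th t = fill_iter c2 m' s).
  { unfold t, m'. destruct t_is_x; [exact Hx | now apply subst_ground]. }
  rewrite !subst_fill, !subst_fill_iter, Hx, Ht, (subst_ground _ s), !fill_iter_add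
    in Hinst by assumption.
  now rewrite (Nat.add_comm m' n3), (Nat.add_comm m n4).
Qed.
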